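(* Let $0<L,W<\infty$, $\tau=iW/L$, $N\in\mathbb{N}$, and let $R_N$ be any of $A_{N-1},B_N,B_N^\vee,C_N,C_N^\vee,BC_N,D_N$. For $\mathbf{z}=(z_1,\dots,z_N)\in\mathbb{C}^N$, $z_j=x_j+iy_j$, define $q(\mathbf{z})=q^{R_N}(\mathbf{z})=C^{R_N}(\mathbf{z})\,W^{R_N}(\mathbf{z}/L;\tau)$. Then for every $m=1,\dots,N$, $$q(\sigma_m(L)\mathbf{z})=\mathrm{sgn}_{(L)}\,q(\mathbf{z}),\qquad q(\sigma_m(iW)\mathbf{z})=\mathrm{sgn}_{(iW)}\,e^{-2\pi i\mathcal{N}x_m/L}\,q(\mathbf{z}),$$ where $\mathrm{sgn}_{(L)}=1$ for $R_N=A_{N-1}$ with $N$ odd, $B_N^\vee$, $C_N$, $D_N$, and $\mathrm{sgn}_{(L)}=-1$ for $R_N=A_{N-1}$ with $N$ even, $B_N$, $C_N^\vee$, $BC_N$; and $\mathrm{sgn}_{(iW)}=1$ for $R_N=A_{N-1},C_N,C_N^\vee,BC_N,D_N$, $\mathrm{sgn}_{(iW)}=-1$ for $R_N=B_N,B_N^\vee$.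
   Context: Jacobi theta functions: for $v\in\mathbb{C}$, $\tau$ with $\Im\tau>0$, $q_0=e^{\pi i\tau}$: $\vartheta_0(v;\tau)=\sum_{n\in\mathbb{Z}}(-1)^nq_0^{n^2}e^{2\pi inv}$, $\vartheta_1(v;\tau)=i\sum_{n\in\mathbb{Z}}(-1)^nq_0^{(n-1/2)^2}e^{(2n-1)\pi iv}$, $\vartheta_2(v;\tau)=\sum_{n\in\mathbb{Z}}q_0^{(n-1/2)^2}e^{(2n-1)\pi iv}$, $\vartheta_3(v;\tau)=\sum_{n\in\mathbb{Z}}q_0^{n^2}e^{2\pi inv}$. The integer $\mathcal{N}=\mathcal{N}^{R_N}$ is: $N$ for $A_{N-1}$; $2N-1$ for $B_N$; $2N$ for $B_N^\vee,C_N^\vee$; $2(N+1)$ for $C_N$; $2N+1$ for $BC_N$; $2(N-1)$ for $D_N$. Macdonald denominators, for $\boldsymbol\xi\in\mathbb{C}^N$, with $P(\boldsymbol\xi)=\prod_{1\le j<k\le N}\vartheta_1(\xi_k-\xi_j;\tau)\vartheta_1(\xi_k+\xi_j;\tau)$: $W^{A_{N-1}}=\prod_{j<k}\vartheta_1(\xi_k-\xi_j;\tau)$; $W^{B_N}=\prod_\ell\vartheta_1(\xi_\ell;\tau)P$; $W^{B_N^\vee}=\prod_\ell\vartheta_1(2\xi_\ell;2\tau)P$; $W^{C_N}=\prod_\ell\vartheta_1(2\xi_\ell;\tau)P$; $W^{C_N^\vee}=\prod_\ell\vartheta_1(\xi_\ell;\tau/2)P$; $W^{BC_N}=\prod_\ell\vartheta_1(\xi_\ell;\tau)\vartheta_0(2\xi_\ell;2\tau)P$;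 $W^{D_N}=P$. Let $s(N)=0$ if $N$ is even and $s(N)=3$ if $N$ is odd. Define $C^{A_{N-1}}(\mathbf{z})=\exp(-\frac{\pi\mathcal{N}}{LW}\sum_j y_j^2)\,\vartheta_{s(N)}(\sum_k z_k/L;\tau)$ and $C^{R_N}(\mathbf{z})=\exp(-\frac{\pi\mathcal{N}}{LW}\sum_j y_j^2)$ for the other six types. $\mathbf{z}/L=(z_1/L,\dots,z_N/L)$. The shift operator $\sigma_m(w)$ replaces $z_m$ by $z_m+w$ and leaves the other coordinates unchanged. *)

From Stdlib Require Import Reals List.
From Coquelicot Require Import Coquelicot.
Import ListNotations.
Open Scope R_scope.

Definition cexp (z : C) : C :=
  (exp (Re z) * cos (Im z), exp (Re z) * sin (Im z)).

(* bilateral sum over Z: limit (in C) of the symmetric partial sums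
   sum_{n=-M}^{M} f n as M -> oo (the theta series converge absolutely) *)
Definition zpartial (f : Z -> C) (M : nat) : C :=
  fold_right Cplus (RtoC 0)
    (map (fun k : nat => f (Z.of_nat k - Z.of_nat M)%Z) (seq 0 (2 * M + 1))).

Definition zsum (f : Z -> C) : C :=
  lim (T := C_CompleteNormedModule) (filtermap (zpartial f) eventually).

Open Scope C_scope.
Definition sgnZ (n : Z) : C := if Z.even n then RtoC 1 else RtoC (-1).

Definition pi_i : C := (0, PI).

(* q_0^{a} with q_0 = e^{pi i tau}: written as exp(pi i tau a) *)
Definition theta0 (v tau : C) : C :=
  zsum (fun n => sgnZ n * cexp (pi_i * tau * RtoC (IZR n ^ 2)
                                + RtoC 2 * pi_i * RtoC (IZR n) * v)).
Definition theta1 (v tau : C) : C :=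
  Ci * zsum (fun n => sgnZ n * cexp (pi_i * tau * RtoC ((IZR n - /2) ^ 2)
                                + RtoC (2 * IZR n - 1) * pi_i * v)).
Definition theta2 (v tau : C) : C :=
  zsum (fun n => cexp (pi_i * tau * RtoC ((IZR n - /2) ^ 2)
                        + RtoC (2 * IZR n - 1) * pi_i * v)).
Definition theta3 (v tau : C) : C :=
  zsum (fun n => cexp (pi_i * tau * RtoC (IZR n ^ 2)
                        + RtoC 2 * pi_i * RtoC (IZR n) * v)).

(* the seven root systems: A_{N-1}, B_N, B_N^vee, C_N, C_N^vee, BC_N, D_N *)
Inductive RootSys := RA | RB | RBv | RC | RCv | RBC | RD.

Open Scope R_scope.
Definition calN (RS : RootSys) (N : nat) : R :=
  match RS with
  | RA => INR N
  | RB => 2 * INR N - 1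
  | RBv | RCv => 2 * INR N
  | RC => 2 * (INR N + 1)
  | RBC => 2 * INR N + 1
  | RD => 2 * (INR N - 1)
  end.

(* vectors in C^N are functions nat -> C, coordinates 1..N stored at 0..N-1 *)
Open Scope C_scope.
Definition cprod (l : list nat) (f : nat -> C) : C :=
  fold_right Cmult (RtoC 1) (map f l).
Definition csum (l : list nat) (f : nat -> C) : C :=
  fold_right Cplus (RtoC 0) (map f l).
Open Scope R_scope.
Definition rsum (l : list nat) (f : nat -> R) : R :=
  fold_right Rplus 0 (map f l).

Open Scope C_scope.
Definition pairprod (N : nat) (f : nat -> nat -> C) : C :=
  cprod (seq 0 N) (fun k => cprod (seq 0 k) (fun j => f j k)).

Definition Pfun (N : nat) (xi : nat -> C) (tau : C) : C :=
  pairprod N (fun j k => theta1 (xi k - xi j) tau * theta1 (xi k + xi j) tau).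

Definition Wden (RS : RootSys) (N : nat) (xi : nat -> C) (tau : C) : C :=
  match RS with
  | RA => pairprod N (fun j k => theta1 (xi k - xi j) tau)
  | RB => cprod (seq 0 N) (fun l => theta1 (xi l) tau) * Pfun N xi tau
  | RBv => cprod (seq 0 N) (fun l => theta1 (RtoC 2 * xi l) (RtoC 2 * tau)) * Pfun N xi tau
  | RC => cprod (seq 0 N) (fun l => theta1 (RtoC 2 * xi l) tau) * Pfun N xi tau
  | RCv => cprod (seq 0 N) (fun l => theta1 (xi l) (tau / RtoC 2)) * Pfun N xi tau
  | RBC => cprod (seq 0 N) (fun l => theta1 (xi l) tau * theta0 (RtoC 2 * xi l) (RtoC 2 * tau))
             * Pfun N xi tau
  | RD => Pfun N xi tau
  end.

Definition Cfac (RS : RootSys) (N : nat) (L W : R) (z : nat -> C) (tau : C) : C :=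
  let g := RtoC (exp (- (PI * calN RS N / (L * W)) * rsum (seq 0 N) (fun j => Im (z j) ^ 2))%R) in
  match RS with
  | RA => g * (if Nat.even N then theta0 (csum (seq 0 N) z / RtoC L) tau
                             else theta3 (csum (seq 0 N) z / RtoC L) tau)
  | _ => g
  end.

Definition qfun (RS : RootSys) (N : nat) (L W : R) (z : nat -> C) : C :=
  let tau : C := (0%R, (W / L)%R) in
  Cfac RS N L W z tau * Wden RS N (fun j => z j / RtoC L) tau.

(* sigma_m(w): shift coordinate m (0-based index) by w *)
Definition shift (m : nat) (w : C) (z : nat -> C) : nat -> C :=
  fun j => if Nat.eqb j m then z j + w else z j.

Definition sgnL (RS : RootSys) (N : nat) : C :=
  match RS with
  | RA => if Nat.even N then RtoC (-1) else RtoC 1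
  | RBv | RC | RD => RtoC 1
  | RB | RCv | RBC => RtoC (-1)
  end.

Definition sgniW (RS : RootSys) : C :=
  match RS with
  | RB | RBv => RtoC (-1)
  | _ => RtoC 1
  end.

(* Put xi = z / L and tau = i W / L.  Then q is a Gaussian in Im z times a product of theta
   functions of xi, and sigma_m(L), sigma_m(iW) shift xi_m by 1 and by tau.  Reindexing
   n -> n + 1 in the (Gaussian-convergent) theta series gives the quasi-periodicity
   theta(v + 1) = +-theta(v) and theta(v + tau) = +-exp(-pi i tau - 2 pi i v) theta(v).
   Each of the N - 1 pair factors theta1(xi_k - xi_j) theta1(xi_k + xi_j) containing xi_m
   picks up exp(2 (-pi i tau - 2 pi i xi_m)), and the one-coordinate factor of type R_N
   supplies the remaining power of this automorphy factor, for a total exponent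
   calN (-pi i tau - 2 pi i xi_m).  For A_(N-1) the difference product leaves factors
   exp(2 pi i xi_j), j <> m, which the theta function of sum_j xi_j absorbs.  The real part
   of the total exponent is exactly the change of the Gaussian prefactor, so only the phase
   exp(-2 pi i calN x_m / L) and the product of the signs remain. *)

From Stdlib Require Import Reals List Lia Lra FunctionalExtensionality.
From Coquelicot Require Import Coquelicot.
Open Scope R_scope.
Open Scope C_scope.

Ltac C_components :=
  unfold Cplus, Cmult, Copp, Cminus, Cdiv, Cinv, RtoC, Re, Im, pi_i, Ci; simpl;
  apply injective_projections; simpl.

(** * Bilateral series with Gaussian decay *)

Lemma fold_Cplus_init (l : list C) (a : C) :
  fold_right Cplus a l = fold_right Cplus 0 l + a.
Proof. induction l as [|x l IH]; simpl; [ring | rewrite IH; ring]. Qed.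

Definition sym_terms (f : Z -> C) (k : nat) : C :=
  match k with
  | O => f 0%Z
  | S k => f (Z.of_nat k + 1)%Z + f (- (Z.of_nat k + 1))%Z
  end.

Lemma zpartial_S f M :
  zpartial f (S M) = f (- (Z.of_nat M + 1))%Z + zpartial f M + f (Z.of_nat M + 1)%Z.
Proof.
  unfold zpartial.
  replace (2 * S M + 1)%nat with (S (S (2 * M + 1))) by lia.
  rewrite <- cons_seq, seq_S, <- seq_shift, map_cons, map_app, map_map.
  cbn [fold_right]. rewrite fold_right_app, fold_Cplus_init. cbn [map fold_right].
  replace (Z.of_nat 0 - Z.of_nat (S M))%Z with (- (Z.of_nat M + 1))%Z by lia.
  replace (Z.of_nat (1 + (2 * M + 1)) - Z.of_nat (S M))%Z with (Z.of_nat M + 1)%Z by lia.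
  rewrite (map_ext (fun k => f (Z.of_nat (S k) - Z.of_nat (S M))%Z)
                   (fun k => f (Z.of_nat k - Z.of_nat M)%Z))
    by (intros k; f_equal; lia).
  ring.
Qed.

Lemma zpartial_sum_n f M : zpartial f M = sum_n (sym_terms f) M.
Proof.
  induction M as [|M IH].
  - rewrite sum_O. unfold zpartial. simpl. ring.
  - rewrite sum_Sn, zpartial_S, IH. simpl. change plus with Cplus. ring.
Qed.

Lemma lim_filtermap_eventually (u : nat -> C) (l : C) :
  filterlim u eventually (locally l) ->
  lim (T := C_CompleteNormedModule) (filtermap u eventually) = l.
Proof.
  intros Hu.
  eapply (filterlim_locally_unique (F := eventually) u); [|exact Hu].
  apply filterlim_locally. intros eps.
  apply (complete_cauchy (T := C_CompleteNormedModule) (filtermap u eventually)).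
  - apply filtermap_proper_filter, eventually_filter.
  - intros e. exists l. exact (proj1 (filterlim_locally u l) Hu e).
Qed.

Lemma zsum_is_series f l : is_series (sym_terms f) l -> zsum f = l.
Proof.
  intros Hl. unfold zsum.
  replace (zpartial f) with (sum_n (sym_terms f))
    by (apply functional_extensionality; intros M; symmetry; apply zpartial_sum_n).
  exact (lim_filtermap_eventually _ _ Hl).
Qed.

Lemma zsum_split f la lb :
  is_series (fun k => f (Z.of_nat k + 1)%Z) la ->
  is_series (fun k => f (- (Z.of_nat k + 1))%Z) lb ->
  zsum f = f 0%Z + la + lb.
Proof.
  intros Ha Hb. apply zsum_is_series, is_series_decr_1.
  match goal with |- is_series _ ?l => replace l with (plus la lb) end.
  - exact (is_series_plus _ _ _ _ Ha Hb).
  - simpl. change plus with Cplus. change opp with Copp. ring.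
Qed.

Definition gaussian_decay (f : Z -> C) : Prop :=
  exists a b c : R, 0 < a /\ forall n, Cmod (f n) <= exp (- a * IZR n ^ 2 + b * IZR n + c).

Lemma exp_neg_INR (k : nat) : exp (- INR k) = (exp (-1) ^ k)%R.
Proof.
  induction k as [|k IH]; [simpl; rewrite Ropp_0; apply exp_0|].
  rewrite S_INR, Ropp_plus_distr, exp_plus, IH, Rmult_comm. reflexivity.
Qed.

(* Completing the square bounds the exponent at [y = k + 1] by [K - k], so the terms are
   dominated by a geometric series of ratio [exp (-1)]. *)
Lemma ex_series_gaussian (u : nat -> C) a b c : 0 < a ->
  (forall k, Cmod (u k) <= exp (- a * (INR k + 1) ^ 2 + b * (INR k + 1) + c)) ->
  ex_series u.
Proof.
  intros Ha Hu.
  set (K := (c + (b + 1) ^ 2 / (4 * a) - 1)%R).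
  apply (ex_series_le (K := C_AbsRing) (V := C_CompleteNormedModule) u
           (fun k => exp K * exp (-1) ^ k)%R).
  - intros k. change norm with Cmod. eapply Rle_trans; [apply Hu|].
    rewrite <- exp_neg_INR, <- exp_plus.
    set (y := (INR k + 1)%R).
    assert (Hsq : 0 <= (2 * a * y - (b + 1)) ^ 2 / (4 * a))
      by (apply Rdiv_le_0_compat; [apply pow2_ge_0 | lra]).
    assert (Hle : (- a * y ^ 2 + b * y + c <= K + - INR k)%R).
    { unfold K. replace (c + (b + 1) ^ 2 / (4 * a) - 1 + - INR k)%R with
        (- a * y ^ 2 + b * y + c + (2 * a * y - (b + 1)) ^ 2 / (4 * a))%R
        by (unfold y; field; lra).
      lra. }
    destruct Hle as [Hlt | ->]; [left; apply exp_increasing, Hlt | right; reflexivity].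
  - apply (ex_series_scal_l (K := R_AbsRing) (V := R_NormedModule)).
    exists (/ (1 - exp (-1)))%R. apply is_series_geom.
    rewrite Rabs_pos_eq by (left; apply exp_pos).
    rewrite <- exp_0. apply exp_increasing. lra.
Qed.

Lemma gaussian_decay_summable f : gaussian_decay f ->
  ex_series (fun k => f (Z.of_nat k + 1)%Z) /\ ex_series (fun k => f (- (Z.of_nat k + 1))%Z).
Proof.
  intros (a & b & c & Ha & Hf). split.
  - apply (ex_series_gaussian _ a b c Ha). intros k.
    rewrite INR_IZR_INZ, <- plus_IZR. apply Hf.
  - apply (ex_series_gaussian _ a (- b) c Ha). intros k.
    eapply Rle_trans; [apply Hf|]. rewrite opp_IZR, plus_IZR, <- INR_IZR_INZ.
    right. f_equal. ring.
Qed.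

Lemma gaussian_decay_succ f : gaussian_decay f -> gaussian_decay (fun n => f (n + 1)%Z).
Proof.
  intros (a & b & c & Ha & Hf). exists a, (b - 2 * a)%R, (c - a + b)%R. split; [exact Ha|].
  intros n. eapply Rle_trans; [apply Hf|]. rewrite plus_IZR. right. f_equal. ring.
Qed.

Lemma gaussian_decay_unimodular (chi f : Z -> C) :
  (forall n, Cmod (chi n) = 1%R) -> gaussian_decay f -> gaussian_decay (fun n => chi n * f n).
Proof.
  intros Hchi (a & b & c & Ha & Hf). exists a, b, c. split; [exact Ha|].
  intros n. rewrite Cmod_mult, Hchi, Rmult_1_l. apply Hf.
Qed.

Lemma zsum_scal (c : C) f : gaussian_decay f -> zsum (fun n => c * f n) = c * zsum f.
Proof.
  intros Hf. destruct (gaussian_decay_summable f Hf) as [[la Ha] [lb Hb]].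
  change C in la, lb.
  rewrite (zsum_split f la lb Ha Hb), (zsum_split _ (c * la) (c * lb)).
  - ring.
  - exact (is_series_scal_l (K := C_AbsRing) (V := C_NormedModule) c _ _ Ha).
  - exact (is_series_scal_l (K := C_AbsRing) (V := C_NormedModule) c _ _ Hb).
Qed.

Lemma zsum_succ f : gaussian_decay f -> zsum (fun n => f (n + 1)%Z) = zsum f.
Proof.
  intros Hf. destruct (gaussian_decay_summable f Hf) as [[la Ha] [lb Hb]].
  change C in la, lb.
  rewrite (zsum_split f la lb Ha Hb), (zsum_split _ (la - f 1%Z) (lb + f 0%Z)).
  - change (0 + 1)%Z with 1%Z. ring.
  - apply (is_series_ext (fun k => f (Z.of_nat (S k) + 1)%Z)).
    + intros k. f_equal. lia.
    + apply (is_series_incr_1 (fun k => f (Z.of_nat k + 1)%Z)).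
      match goal with |- is_series _ ?l => replace l with la; [exact Ha|] end.
      simpl. change plus with Cplus. ring.
  - apply (is_series_decr_1 (fun k => f (- (Z.of_nat k + 1) + 1)%Z)).
    apply (is_series_ext (fun k => f (- (Z.of_nat k + 1))%Z)).
    + intros k. f_equal. lia.
    + match goal with |- is_series _ ?l => replace l with lb; [exact Hb|] end.
      simpl. change plus with Cplus. change opp with Copp. ring.
Qed.

Lemma zsum_proportional f g (c : C) : gaussian_decay g ->
  (forall n, f n = c * g n) -> zsum f = c * zsum g.
Proof.
  intros Hg Hfg. rewrite <- zsum_scal by exact Hg.
  f_equal. apply functional_extensionality, Hfg.
Qed.

Lemma zsum_quasi_periodic f g (c : C) : gaussian_decay g ->
  (forall n, f n = c * g (n + 1)%Z) -> zsum f = c * zsum g.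
Proof.
  intros Hg Hfg. rewrite <- (zsum_succ g) by exact Hg.
  apply zsum_proportional; [apply gaussian_decay_succ, Hg | exact Hfg].
Qed.

Lemma cexp_add (a b : C) : cexp (a + b) = cexp a * cexp b.
Proof.
  destruct a as [a1 a2], b as [b1 b2]. unfold cexp, Cplus, Cmult; simpl.
  rewrite exp_plus, cos_plus, sin_plus. apply injective_projections; simpl; ring.
Qed.

Lemma cexp_0 : cexp 0 = 1.
Proof.
  unfold cexp; simpl. rewrite exp_0, cos_0, sin_0.
  apply injective_projections; simpl; ring.
Qed.

Lemma cexp_opp_l (a : C) : cexp (- a) * cexp a = 1.
Proof. rewrite <- cexp_add, <- cexp_0. f_equal. ring. Qed.

Lemma cexp_RtoC (r : R) : cexp (RtoC r) = RtoC (exp r).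
Proof.
  unfold cexp; simpl. rewrite cos_0, sin_0.
  apply injective_projections; simpl; ring.
Qed.

Lemma Cmod_cexp (a : C) : Cmod (cexp a) = exp (Re a).
Proof.
  destruct a as [r t]. unfold cexp, Cmod; simpl.
  replace (exp r * cos t * (exp r * cos t * 1) + exp r * sin t * (exp r * sin t * 1))%R
    with (exp r * exp r * (sin t ^ 2 + cos t ^ 2))%R by ring.
  rewrite <- !Rsqr_pow2, sin2_cos2, Rmult_1_r.
  apply sqrt_square. left. apply exp_pos.
Qed.

Lemma Cpow_cexp (a : C) n : cexp a ^ n = cexp (RtoC (INR n) * a).
Proof.
  induction n as [|n IH].
  - simpl. rewrite Cmult_0_l. symmetry. apply cexp_0.
  - rewrite Cpow_S, IH, <- cexp_add, S_INR, RtoC_plus. f_equal. ring.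
Qed.

Lemma cexp_2pi_i_int (k : Z) : cexp (RtoC 2 * pi_i * RtoC (IZR k)) = 1.
Proof.
  assert (Hsin : sin (IZR k * PI) = 0%R) by (apply sin_eq_0_1; exists k; reflexivity).
  replace (RtoC 2 * pi_i * RtoC (IZR k)) with ((0, 2 * (IZR k * PI))%R : C)
    by (C_components; ring).
  unfold cexp; simpl. rewrite exp_0, cos_2a_sin, sin_2a, Hsin.
  apply injective_projections; simpl; ring.
Qed.

Lemma cexp_neg_pi_i : cexp (- pi_i) = - 1.
Proof.
  unfold cexp, pi_i; simpl. rewrite Ropp_0, exp_0, cos_neg, sin_neg, cos_PI, sin_PI.
  apply injective_projections; simpl; ring.
Qed.

(** * Quasi-periodicity of the theta functions *)

Definition aut_exponent (tau v : C) : C := - (pi_i * tau) - RtoC 2 * pi_i * v.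

Definition theta_term (a : R) (v tau : C) (n : Z) : C :=
  cexp (pi_i * tau * RtoC ((IZR n + a) ^ 2) + RtoC 2 * pi_i * RtoC (IZR n + a) * v).

Definition theta_series (chi : Z -> C) (a : R) (v tau : C) : C :=
  zsum (fun n => chi n * theta_term a v tau n).

Lemma theta3_series v tau : theta3 v tau = theta_series (fun _ => 1) 0 v tau.
Proof.
  unfold theta3, theta_series, theta_term. f_equal.
  apply functional_extensionality. intros n. rewrite Rplus_0_r. ring.
Qed.

Lemma theta0_series v tau : theta0 v tau = theta_series sgnZ 0 v tau.
Proof.
  unfold theta0, theta_series, theta_term. f_equal.
  apply functional_extensionality. intros n. rewrite Rplus_0_r. reflexivity.
Qed.

Lemma theta1_series v tau : theta1 v tau = Ci * theta_series sgnZ (- / 2) v tau.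
Proof.
  unfold theta1, theta_series, theta_term. do 2 f_equal.
  apply functional_extensionality. intros n.
  replace (RtoC (2 * IZR n - 1)) with (RtoC 2 * RtoC (IZR n + - / 2))
    by (rewrite <- RtoC_mult; f_equal; field).
  f_equal. f_equal. f_equal. ring.
Qed.

Lemma theta_term_decay a v tau : (0 < Im tau)%R -> gaussian_decay (theta_term a v tau).
Proof.
  destruct v as [vr vi], tau as [tr ti]. simpl. intros Hti.
  exists (PI * ti)%R, (- 2 * PI * ti * a - 2 * PI * vi)%R, (- PI * ti * a ^ 2 - 2 * PI * vi * a)%R.
  split; [apply Rmult_lt_0_compat; [apply PI_RGT_0 | exact Hti]|].
  intros n. unfold theta_term. rewrite Cmod_cexp. right. f_equal.
  unfold Cplus, Cmult, RtoC, pi_i; simpl. ring.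
Qed.

Lemma theta_term_add1 a v tau n :
  theta_term a (v + 1) tau n = cexp (RtoC 2 * pi_i * RtoC a) * theta_term a v tau n.
Proof.
  unfold theta_term. rewrite RtoC_plus.
  set (E := pi_i * tau * RtoC ((IZR n + a) ^ 2)).
  replace (E + RtoC 2 * pi_i * (RtoC (IZR n) + RtoC a) * (v + 1))
    with (E + RtoC 2 * pi_i * (RtoC (IZR n) + RtoC a) * v
          + RtoC 2 * pi_i * RtoC (IZR n) + RtoC 2 * pi_i * RtoC a) by ring.
  rewrite !cexp_add, cexp_2pi_i_int. ring.
Qed.

Lemma theta_term_add_tau a v tau n :
  theta_term a (v + tau) tau n = cexp (aut_exponent tau v) * theta_term a v tau (n + 1).
Proof.
  unfold theta_term, aut_exponent. rewrite <- cexp_add. f_equal.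
  rewrite plus_IZR. destruct v, tau. C_components; ring.
Qed.

Lemma sgnZ_succ n : sgnZ (n + 1) = - sgnZ n.
Proof.
  unfold sgnZ. rewrite Z.even_add. simpl.
  destruct (Z.even n); simpl; C_components; ring.
Qed.

Lemma sgnZ_pred n : sgnZ n = - (1) * sgnZ (n + 1).
Proof. rewrite sgnZ_succ. ring. Qed.

Lemma Cmod_sgnZ n : Cmod (sgnZ n) = 1%R.
Proof.
  unfold sgnZ. destruct (Z.even n); rewrite Cmod_R; [apply Rabs_R1 | apply Rabs_m1].
Qed.

Section ThetaSeries.

Variables (chi : Z -> C) (a : R) (tau : C).
Hypothesis Htau : (0 < Im tau)%R.
Hypothesis chi_unimodular : forall n, Cmod (chi n) = 1%R.

Lemma theta_series_add1 v :
  theta_series chi a (v + 1) tau = cexp (RtoC 2 * pi_i * RtoC a) * theta_series chi a v tau.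
Proof.
  apply zsum_proportional.
  - apply gaussian_decay_unimodular; [exact chi_unimodular | apply theta_term_decay, Htau].
  - intros n. rewrite theta_term_add1. ring.
Qed.

Lemma theta_series_add_tau (eps : C) v : (forall n, chi n = eps * chi (n + 1)%Z) ->
  theta_series chi a (v + tau) tau = eps * cexp (aut_exponent tau v) * theta_series chi a v tau.
Proof.
  intros Hchi. apply zsum_quasi_periodic.
  - apply gaussian_decay_unimodular; [exact chi_unimodular | apply theta_term_decay, Htau].
  - intros n. rewrite theta_term_add_tau, Hchi. ring.
Qed.

End ThetaSeries.

Section Quasiperiodicity.

Variable tau : C.
Hypothesis Htau : (0 < Im tau)%R.

Lemma theta3_add1 v : theta3 (v + 1) tau = theta3 v tau.
Proof.
  rewrite !theta3_series, theta_series_add1, (cexp_2pi_i_int 0) by (auto; intros; apply Cmod_1).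
  ring.
Qed.

Lemma theta0_add1 v : theta0 (v + 1) tau = theta0 v tau.
Proof.
  rewrite !theta0_series, theta_series_add1, (cexp_2pi_i_int 0) by (auto; apply Cmod_sgnZ).
  ring.
Qed.

Lemma theta1_add1 v : theta1 (v + 1) tau = - theta1 v tau.
Proof.
  rewrite !theta1_series, theta_series_add1 by (auto; apply Cmod_sgnZ).
  replace (RtoC 2 * pi_i * RtoC (- / 2)) with (- pi_i) by (C_components; field).
  rewrite cexp_neg_pi_i. ring.
Qed.

Lemma theta1_sub1 v : theta1 (v - 1) tau = - theta1 v tau.
Proof.
  replace (theta1 v tau) with (theta1 ((v - 1) + 1) tau) by (f_equal; ring).
  rewrite theta1_add1. ring.
Qed.

Lemma theta3_add_tau v : theta3 (v + tau) tau = cexp (aut_exponent tau v) * theta3 v tau.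
Proof.
  rewrite !theta3_series, (theta_series_add_tau _ _ _ Htau (fun _ => Cmod_1) 1);
    [ring | intros; ring].
Qed.

Lemma theta0_add_tau v : theta0 (v + tau) tau = - cexp (aut_exponent tau v) * theta0 v tau.
Proof.
  rewrite !theta0_series, (theta_series_add_tau _ _ _ Htau Cmod_sgnZ (- (1)));
    [ring | apply sgnZ_pred].
Qed.

Lemma theta1_add_tau v : theta1 (v + tau) tau = - cexp (aut_exponent tau v) * theta1 v tau.
Proof.
  rewrite !theta1_series, (theta_series_add_tau _ _ _ Htau Cmod_sgnZ (- (1)));
    [ring | apply sgnZ_pred].
Qed.

Lemma theta1_sub_tau v :
  theta1 (v - tau) tau = - cexp (- aut_exponent tau (v - tau)) * theta1 v tau.
Proof.
  replace (theta1 v tau) with (theta1 ((v - tau) + tau) tau) by (f_equal; ring).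
  rewrite theta1_add_tau.
  transitivity ((cexp (- aut_exponent tau (v - tau)) * cexp (aut_exponent tau (v - tau)))
                * theta1 (v - tau) tau); [rewrite cexp_opp_l | ]; ring.
Qed.

End Quasiperiodicity.

Lemma Im_double_pos tau : (0 < Im tau)%R -> (0 < Im (RtoC 2 * tau))%R.
Proof. destruct tau as [a b]. simpl. lra. Qed.

Lemma Im_half_pos tau : (0 < Im tau)%R -> (0 < Im (tau / RtoC 2))%R.
Proof.
  destruct tau as [a b]. unfold Cdiv, Cinv, Cmult, RtoC. simpl. intros Hb.
  replace (a * (- 0 / (2 * 2 + 0 * 0)) + b * (2 / (2 * 2 + 0 * 0)))%R with (b / 2)%R
    by field. lra.
Qed.

Section FoldUpdate.

Variables (A : Type) (op : A -> A -> A) (e : A).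
Hypothesis op_assoc : forall x y z, op x (op y z) = op (op x y) z.
Hypothesis op_comm : forall x y, op x y = op y x.

Lemma fold_seq_update s N m c (f g : nat -> A) : (s <= m < s + N)%nat ->
  (forall l, (s <= l < s + N)%nat -> l <> m -> g l = f l) -> g m = op c (f m) ->
  fold_right op e (map g (seq s N)) = op c (fold_right op e (map f (seq s N))).
Proof.
  revert s. induction N as [|N IH]; intros s Hm Hfg Hgm; [lia|].
  cbn [seq map fold_right].
  destruct (Nat.eq_dec s m) as [<- | Hsm].
  - rewrite Hgm, <- op_assoc. do 3 f_equal. apply map_ext_in.
    intros l Hl. apply in_seq in Hl. apply Hfg; lia.
  - rewrite (Hfg s), (IH (S s))
      by first [lia | exact Hgm | intros l Hl Hlm; apply Hfg; lia].
    rewrite !op_assoc, (op_comm (f s) c). reflexivity.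
Qed.

End FoldUpdate.

Lemma cprod_S N f : cprod (seq 0 (S N)) f = cprod (seq 0 N) f * f N.
Proof.
  rewrite seq_S. unfold cprod. rewrite map_app, fold_right_app. simpl.
  generalize (f N). induction (map f (seq 0 N)) as [|x l IH]; intros y; simpl; [ring|].
  rewrite IH. ring.
Qed.

Lemma cprod_ext l f g : (forall x, In x l -> f x = g x) -> cprod l f = cprod l g.
Proof. intros Hfg. unfold cprod. f_equal. apply map_ext_in, Hfg. Qed.

Lemma cprod_mult l f g : cprod l (fun x => f x * g x) = cprod l f * cprod l g.
Proof. induction l as [|x l IH]; unfold cprod in *; simpl; [ring | rewrite IH; ring]. Qed.

Lemma cprod_one l : cprod l (fun _ => 1) = 1.
Proof. induction l as [|x l IH]; unfold cprod in *; simpl; [reflexivity | rewrite IH; ring]. Qed.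

Lemma cprod_const n (c : C) : cprod (seq 0 n) (fun _ => c) = c ^ n.
Proof. induction n as [|n IH]; [reflexivity|]. rewrite cprod_S, IH. simpl. ring. Qed.

Lemma cprod_cexp l h : cprod l (fun x => cexp (h x)) = cexp (csum l h).
Proof.
  induction l as [|x l IH]; unfold cprod, csum in *; simpl; [symmetry; apply cexp_0|].
  rewrite IH, cexp_add. reflexivity.
Qed.

Lemma csum_scal l (a : C) h : csum l (fun x => a * h x) = a * csum l h.
Proof. induction l as [|x l IH]; unfold csum in *; simpl; [ring | rewrite IH; ring]. Qed.

Lemma cprod_indicator N m (c : C) : (m < N)%nat ->
  cprod (seq 0 N) (fun j => if Nat.eqb j m then c else 1) = c.
Proof.
  intros Hm. transitivity (c * cprod (seq 0 N) (fun _ => 1)); [|rewrite cprod_one; ring].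
  apply (fold_seq_update _ _ _ Cmult_assoc Cmult_comm 0 N m); [lia | |].
  - intros l _ Hl. rewrite (proj2 (Nat.eqb_neq l m) Hl). reflexivity.
  - rewrite Nat.eqb_refl. ring.
Qed.

Definition cprod_except (N m : nat) (phi : nat -> C) : C :=
  cprod (seq 0 N) (fun o => if Nat.eqb o m then 1 else phi o).

Lemma cprod_except_S N m phi : (m < N)%nat ->
  cprod_except (S N) m phi = cprod_except N m phi * phi N.
Proof.
  intros Hm. unfold cprod_except. rewrite cprod_S.
  rewrite (proj2 (Nat.eqb_neq N m)) by lia. reflexivity.
Qed.

Lemma cprod_except_last N phi : cprod_except (S N) N phi = cprod (seq 0 N) phi.
Proof.
  unfold cprod_except. rewrite cprod_S, Nat.eqb_refl, Cmult_1_r.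
  apply cprod_ext. intros o Ho. apply in_seq in Ho.
  rewrite (proj2 (Nat.eqb_neq o N)) by lia. reflexivity.
Qed.

Lemma cprod_except_mult N m phi psi :
  cprod_except N m (fun o => phi o * psi o) = cprod_except N m phi * cprod_except N m psi.
Proof.
  unfold cprod_except. rewrite <- cprod_mult. apply cprod_ext.
  intros o _. destruct (Nat.eqb o m); ring.
Qed.

Lemma cprod_except_const N m (c : C) : (m < N)%nat -> cprod_except N m (fun _ => c) = c ^ (N - 1).
Proof.
  induction N as [|N IH]; intros Hm; [lia|].
  destruct (Nat.eq_dec m N) as [-> | Hne].
  - rewrite cprod_except_last. replace (S N - 1)%nat with N by lia.
    apply cprod_const.
  - rewrite cprod_except_S, IH by lia.
    replace (S N - 1)%nat with (S (N - 1)) by lia. simpl. ring.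
Qed.

Lemma cprod_except_cexp N m h : (m < N)%nat ->
  cprod_except N m (fun o => cexp (h o)) = cexp (csum (seq 0 N) h - h m).
Proof.
  intros Hm. unfold cprod_except.
  rewrite (cprod_ext _ _ (fun o => cexp (if Nat.eqb o m then 0 else h o)))
    by (intros o _; destruct (Nat.eqb o m); [symmetry; apply cexp_0 | reflexivity]).
  rewrite cprod_cexp. f_equal.
  unfold csum.
  rewrite (fold_seq_update _ _ _ Cplus_assoc Cplus_comm 0 N m (h m)
             (fun o => if Nat.eqb o m then 0 else h o) h); [ring | lia | |].
  - intros l _ Hl. rewrite (proj2 (Nat.eqb_neq l m) Hl). reflexivity.
  - rewrite Nat.eqb_refl. ring.
Qed.

Lemma pairprod_S N f : pairprod (S N) f = pairprod N f * cprod (seq 0 N) (fun j => f j N).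
Proof. apply cprod_S. Qed.

Lemma pairprod_ext N f g :
  (forall j k, (j < k < N)%nat -> f j k = g j k) -> pairprod N f = pairprod N g.
Proof.
  intros Hfg. apply cprod_ext. intros k Hk. apply in_seq in Hk.
  apply cprod_ext. intros j Hj. apply in_seq in Hj. apply Hfg. lia.
Qed.

Lemma pairprod_mult N f g :
  pairprod N (fun j k => f j k * g j k) = pairprod N f * pairprod N g.
Proof.
  unfold pairprod. rewrite <- cprod_mult. apply cprod_ext. intros k _. apply cprod_mult.
Qed.

Lemma pairprod_one N : pairprod N (fun _ _ => 1) = 1.
Proof.
  unfold pairprod. rewrite (cprod_ext _ _ (fun _ => 1)) by (intros; apply cprod_one).
  apply cprod_one.
Qed.

Definition incident (m : nat) (phi : nat -> C) (j k : nat) : C :=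
  if Nat.eqb k m then phi j else if Nat.eqb j m then phi k else 1.

Lemma pairprod_incident_factor N m phi : (m < N)%nat ->
  pairprod N (incident m phi) = cprod_except N m phi.
Proof.
  induction N as [|N IH]; intros Hm; [lia|].
  rewrite pairprod_S. unfold incident at 2.
  destruct (Nat.eq_dec m N) as [<- | Hne].
  - rewrite Nat.eqb_refl, cprod_except_last, (pairprod_ext m _ (fun _ _ => 1)), pairprod_one.
    + apply Cmult_1_l.
    + intros j k Hjk. unfold incident.
      rewrite (proj2 (Nat.eqb_neq k m)), (proj2 (Nat.eqb_neq j m)) by lia. reflexivity.
  - rewrite IH, cprod_except_S, (proj2 (Nat.eqb_neq N m)), cprod_indicator by lia.
    reflexivity.
Qed.

Lemma pairprod_incident N m phi c f g : (m < N)%nat -> cprod_except N m phi = c ->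
  (forall j k, (j < k < N)%nat -> g j k = incident m phi j k * f j k) ->
  pairprod N g = c * pairprod N f.
Proof.
  intros Hm <- Hg.
  rewrite (pairprod_ext N g _ Hg), pairprod_mult, pairprod_incident_factor by exact Hm.
  reflexivity.
Qed.

(** * Shifting one coordinate *)

Lemma shift_eq m d (xi : nat -> C) : shift m d xi m = xi m + d.
Proof. unfold shift. rewrite Nat.eqb_refl. reflexivity. Qed.

Lemma shift_neq m d (xi : nat -> C) l : l <> m -> shift m d xi l = xi l.
Proof. intros Hl. unfold shift. rewrite (proj2 (Nat.eqb_neq l m) Hl). reflexivity. Qed.

Lemma shift_div m w (z : nat -> C) (c : C) : c <> 0 ->
  (fun j => shift m w z j / c) = shift m (w / c) (fun j => z j / c).
Proof.
  intros Hc. apply functional_extensionality. intros j. unfold shift.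
  destruct (Nat.eqb j m); [field; exact Hc | reflexivity].
Qed.

Lemma cprod_shift N m d xi (F : C -> C) (c : C) : (m < N)%nat ->
  F (xi m + d) = c * F (xi m) ->
  cprod (seq 0 N) (fun l => F (shift m d xi l)) = c * cprod (seq 0 N) (fun l => F (xi l)).
Proof.
  intros Hm HF. apply (fold_seq_update _ _ _ Cmult_assoc Cmult_comm 0 N m); [lia | |].
  - intros l _ Hl. rewrite shift_neq; auto.
  - rewrite shift_eq. exact HF.
Qed.

Lemma csum_shift N m d (xi : nat -> C) : (m < N)%nat ->
  csum (seq 0 N) (shift m d xi) = d + csum (seq 0 N) xi.
Proof.
  intros Hm. apply (fold_seq_update _ _ _ Cplus_assoc Cplus_comm 0 N m); [lia | |].
  - intros l _ Hl. apply shift_neq; auto.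
  - rewrite shift_eq. ring.
Qed.

Lemma rsum_shift N m d (xi : nat -> C) (F : C -> R) (r : R) : (m < N)%nat ->
  F (xi m + d) = (r + F (xi m))%R ->
  rsum (seq 0 N) (fun l => F (shift m d xi l)) = (r + rsum (seq 0 N) (fun l => F (xi l)))%R.
Proof.
  intros Hm HF.
  apply (fold_seq_update _ _ _ (fun x y z => eq_sym (Rplus_assoc x y z)) Rplus_comm 0 N m);
    [lia | |].
  - intros l _ Hl. rewrite shift_neq; auto.
  - rewrite shift_eq. exact HF.
Qed.

Section ShiftedProducts.

Variables (tau : C) (N m : nat) (xi : nat -> C).
Hypothesis Htau : (0 < Im tau)%R.
Hypothesis Hm : (m < N)%nat.

Ltac split_incident :=
  intros j k Hjk; unfold incident;
  destruct (Nat.eqb_spec k m) as [-> | Hk]; destruct (Nat.eqb_spec j m) as [-> | Hj];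
  [lia | | | ]; rewrite ?shift_eq; rewrite ?shift_neq by assumption.

Lemma Pfun_shift1 : Pfun N (shift m 1 xi) tau = Pfun N xi tau.
Proof.
  rewrite <- (Cmult_1_l (Pfun N xi tau)).
  apply (pairprod_incident N m (fun _ => 1)); [exact Hm | |].
  - rewrite cprod_except_const by exact Hm. apply Cpow_1_l.
  - split_incident.
    + replace (xi m + 1 - xi j) with ((xi m - xi j) + 1) by ring.
      replace (xi m + 1 + xi j) with ((xi m + xi j) + 1) by ring.
      rewrite !theta1_add1 by exact Htau. ring.
    + replace (xi k - (xi m + 1)) with ((xi k - xi m) - 1) by ring.
      replace (xi k + (xi m + 1)) with ((xi k + xi m) + 1) by ring.
      rewrite theta1_sub1, theta1_add1 by exact Htau. ring.
    + ring.
Qed.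

Lemma Pfun_shift_tau : Pfun N (shift m tau xi) tau =
  cexp (RtoC (INR (N - 1)) * (RtoC 2 * aut_exponent tau (xi m))) * Pfun N xi tau.
Proof.
  apply (pairprod_incident N m (fun _ => cexp (RtoC 2 * aut_exponent tau (xi m))));
    [exact Hm | |].
  - rewrite cprod_except_const by exact Hm. apply Cpow_cexp.
  - split_incident.
    + replace (xi m + tau - xi j) with ((xi m - xi j) + tau) by ring.
      replace (xi m + tau + xi j) with ((xi m + xi j) + tau) by ring.
      rewrite !theta1_add_tau by exact Htau.
      replace (RtoC 2 * aut_exponent tau (xi m))
        with (aut_exponent tau (xi m - xi j) + aut_exponent tau (xi m + xi j))
        by (unfold aut_exponent; ring).
      rewrite cexp_add. ring.
    + replace (xi k - (xi m + tau)) with ((xi k - xi m) - tau) by ring.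
      replace (xi k + (xi m + tau)) with ((xi k + xi m) + tau) by ring.
      rewrite theta1_sub_tau, theta1_add_tau by exact Htau.
      replace (RtoC 2 * aut_exponent tau (xi m))
        with (- aut_exponent tau (xi k - xi m - tau) + aut_exponent tau (xi k + xi m))
        by (unfold aut_exponent; ring).
      rewrite cexp_add. ring.
    + ring.
Qed.

Lemma WdenA_shift1 :
  Wden RA N (shift m 1 xi) tau = (- (1)) ^ (N - 1) * Wden RA N xi tau.
Proof.
  apply (pairprod_incident N m (fun _ => - (1))); [exact Hm | |].
  - apply cprod_except_const, Hm.
  - split_incident.
    + replace (xi m + 1 - xi j) with ((xi m - xi j) + 1) by ring.
      rewrite theta1_add1 by exact Htau. ring.
    + replace (xi k - (xi m + 1)) with ((xi k - xi m) - 1) by ring.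
      rewrite theta1_sub1 by exact Htau. ring.
    + ring.
Qed.

Lemma WdenA_shift_tau :
  Wden RA N (shift m tau xi) tau =
  (- cexp (aut_exponent tau (xi m))) ^ (N - 1)
  * cprod_except N m (fun o => cexp (RtoC 2 * pi_i * xi o)) * Wden RA N xi tau.
Proof.
  apply (pairprod_incident N m
           (fun o => - cexp (aut_exponent tau (xi m)) * cexp (RtoC 2 * pi_i * xi o)));
    [exact Hm | |].
  - rewrite cprod_except_mult, cprod_except_const by exact Hm. reflexivity.
  - split_incident.
    + replace (xi m + tau - xi j) with ((xi m - xi j) + tau) by ring.
      rewrite theta1_add_tau by exact Htau.
      replace (aut_exponent tau (xi m - xi j))
        with (aut_exponent tau (xi m) + RtoC 2 * pi_i * xi j) by (unfold aut_exponent; ring).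
      rewrite cexp_add. ring.
    + replace (xi k - (xi m + tau)) with ((xi k - xi m) - tau) by ring.
      rewrite theta1_sub_tau by exact Htau.
      replace (- aut_exponent tau (xi k - xi m - tau))
        with (aut_exponent tau (xi m) + RtoC 2 * pi_i * xi k) by (unfold aut_exponent; ring).
      rewrite cexp_add. ring.
    + ring.
Qed.

End ShiftedProducts.

Definition unary_factor (RS : RootSys) (x tau : C) : C :=
  match RS with
  | RB => theta1 x tau
  | RBv => theta1 (RtoC 2 * x) (RtoC 2 * tau)
  | RC => theta1 (RtoC 2 * x) tau
  | RCv => theta1 x (tau / RtoC 2)
  | RBC => theta1 x tau * theta0 (RtoC 2 * x) (RtoC 2 * tau)
  | RA | RD => 1
  end.

Definition unary_degree (RS : RootSys) : R :=
  match RS with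
  | RB => 1
  | RBv | RCv => 2
  | RC => 4
  | RBC => 3
  | RA | RD => 0
  end.

Lemma Wden_factor RS N xi tau : RS <> RA ->
  Wden RS N xi tau = cprod (seq 0 N) (fun l => unary_factor RS (xi l) tau) * Pfun N xi tau.
Proof.
  intros HRS. destruct RS; try congruence; try reflexivity.
  simpl. rewrite cprod_one. ring.
Qed.

Lemma calN_factor RS N : RS <> RA -> calN RS N = (unary_degree RS + 2 * (INR N - 1))%R.
Proof. intros HRS. destruct RS; try congruence; simpl; ring. Qed.

Lemma unary_factor_add1 RS N x tau : RS <> RA -> (0 < Im tau)%R ->
  unary_factor RS (x + 1) tau = sgnL RS N * unary_factor RS x tau.
Proof.
  intros HRS Htau. destruct RS; try congruence; simpl.
  - rewrite theta1_add1 by exact Htau. ring.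
  - replace (RtoC 2 * (x + 1)) with (RtoC 2 * x + 1 + 1) by ring.
    rewrite !theta1_add1 by (apply Im_double_pos, Htau). ring.
  - replace (RtoC 2 * (x + 1)) with (RtoC 2 * x + 1 + 1) by ring.
    rewrite !theta1_add1 by exact Htau. ring.
  - rewrite theta1_add1 by (apply Im_half_pos, Htau). ring.
  - replace (RtoC 2 * (x + 1)) with (RtoC 2 * x + 1 + 1) by ring.
    rewrite theta1_add1, !theta0_add1 by (apply Im_double_pos, Htau || exact Htau). ring.
  - ring.
Qed.

Lemma unary_factor_add_tau RS x tau : (0 < Im tau)%R ->
  unary_factor RS (x + tau) tau =
  sgniW RS * cexp (RtoC (unary_degree RS) * aut_exponent tau x) * unary_factor RS x tau.
Proof.
  intros Htau. destruct RS; simpl.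
  - rewrite Cmult_0_l, cexp_0. ring.
  - rewrite theta1_add_tau by exact Htau. rewrite Cmult_1_l. ring.
  - replace (RtoC 2 * (x + tau)) with (RtoC 2 * x + RtoC 2 * tau) by ring.
    rewrite theta1_add_tau by (apply Im_double_pos, Htau).
    replace (aut_exponent (RtoC 2 * tau) (RtoC 2 * x)) with (RtoC 2 * aut_exponent tau x)
      by (unfold aut_exponent; ring).
    ring.
  - replace (RtoC 2 * (x + tau)) with (RtoC 2 * x + tau + tau) by ring.
    rewrite !theta1_add_tau by exact Htau.
    replace (RtoC 4 * aut_exponent tau x)
      with (aut_exponent tau (RtoC 2 * x + tau) + aut_exponent tau (RtoC 2 * x))
      by (unfold aut_exponent; ring).
    rewrite cexp_add. ring.
  - replace (x + tau) with (x + tau / RtoC 2 + tau / RtoC 2) by field.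
    rewrite !theta1_add_tau by (apply Im_half_pos, Htau).
    replace (RtoC 2 * aut_exponent tau x)
      with (aut_exponent (tau / RtoC 2) (x + tau / RtoC 2) + aut_exponent (tau / RtoC 2) x)
      by (unfold aut_exponent; field).
    rewrite cexp_add. ring.
  - replace (RtoC 2 * (x + tau)) with (RtoC 2 * x + RtoC 2 * tau) by ring.
    rewrite theta1_add_tau, theta0_add_tau by (apply Im_double_pos, Htau || exact Htau).
    replace (RtoC 3 * aut_exponent tau x)
      with (aut_exponent tau x + aut_exponent (RtoC 2 * tau) (RtoC 2 * x))
      by (unfold aut_exponent; ring).
    rewrite cexp_add. ring.
  - rewrite Cmult_0_l, cexp_0. ring.
Qed.

Lemma Cpow_neg1 n : (- (1)) ^ n = if Nat.even n then 1 else - (1).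
Proof.
  induction n as [|n IH]; [reflexivity|].
  rewrite Cpow_S, IH, Nat.even_succ, <- Nat.negb_even.
  destruct (Nat.even n); simpl; ring.
Qed.

Lemma sgnL_RA_Cpow N : (0 < N)%nat -> (- (1)) ^ (N - 1) = sgnL RA N.
Proof.
  intros HN. destruct N as [|N]; [lia|]. replace (S N - 1)%nat with N by lia.
  unfold sgnL. rewrite Cpow_neg1, Nat.even_succ, <- Nat.negb_even.
  destruct (Nat.even N); simpl; ring.
Qed.

Lemma sgnL_RA_sqr N : sgnL RA N * sgnL RA N = 1.
Proof. simpl. destruct (Nat.even N); ring. Qed.

Lemma Wden_shift1 RS N m xi tau : (0 < Im tau)%R -> (m < N)%nat ->
  Wden RS N (shift m 1 xi) tau = sgnL RS N * Wden RS N xi tau.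
Proof.
  intros Htau Hm. destruct (RS) eqn:HRS.
  - rewrite WdenA_shift1, sgnL_RA_Cpow by (auto; lia). reflexivity.
  all: rewrite !Wden_factor, Pfun_shift1 by (auto; discriminate);
    rewrite (cprod_shift N m 1 xi (fun x => unary_factor _ x tau) (sgnL _ N))
      by (auto; apply unary_factor_add1; auto; discriminate);
    ring.
Qed.

Lemma Wden_shift_tau RS N m xi tau : RS <> RA -> (0 < Im tau)%R -> (m < N)%nat ->
  Wden RS N (shift m tau xi) tau =
  sgniW RS * cexp (RtoC (calN RS N) * aut_exponent tau (xi m)) * Wden RS N xi tau.
Proof.
  intros HRS Htau Hm.
  rewrite !Wden_factor, Pfun_shift_tau by assumption.
  rewrite (cprod_shift N m tau xi (fun x => unary_factor RS x tau)
             (sgniW RS * cexp (RtoC (unary_degree RS) * aut_exponent tau (xi m))))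
    by (auto; apply unary_factor_add_tau, Htau).
  replace (RtoC (calN RS N) * aut_exponent tau (xi m))
    with (RtoC (unary_degree RS) * aut_exponent tau (xi m)
          + RtoC (INR (N - 1)) * (RtoC 2 * aut_exponent tau (xi m))).
  - rewrite cexp_add. ring.
  - rewrite calN_factor, minus_INR by (auto; lia).
    rewrite INR_1, RtoC_plus, RtoC_mult, !RtoC_minus. ring.
Qed.

(** * The function q *)

Definition theta_s (N : nat) (v tau : C) : C :=
  if Nat.even N then theta0 v tau else theta3 v tau.

Lemma theta_s_add1 N v tau : (0 < Im tau)%R -> theta_s N (v + 1) tau = theta_s N v tau.
Proof.
  intros Htau. unfold theta_s.
  destruct (Nat.even N); [apply theta0_add1 | apply theta3_add1]; exact Htau.
Qed.

Lemma theta_s_add_tau N v tau : (0 < Im tau)%R ->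
  theta_s N (v + tau) tau = sgnL RA N * cexp (aut_exponent tau v) * theta_s N v tau.
Proof.
  intros Htau. unfold theta_s, sgnL.
  destruct (Nat.even N); [rewrite theta0_add_tau | rewrite theta3_add_tau]; auto; ring.
Qed.

Definition center_factor (RS : RootSys) (N : nat) (v tau : C) : C :=
  match RS with RA => theta_s N v tau | _ => 1 end.

Definition qhol (RS : RootSys) (N : nat) (xi : nat -> C) (tau : C) : C :=
  center_factor RS N (csum (seq 0 N) xi) tau * Wden RS N xi tau.

Lemma qhol_shift1 RS N m xi tau : (0 < Im tau)%R -> (m < N)%nat ->
  qhol RS N (shift m 1 xi) tau = sgnL RS N * qhol RS N xi tau.
Proof.
  intros Htau Hm. unfold qhol.
  rewrite Wden_shift1, csum_shift, Cplus_comm by assumption.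
  destruct RS; simpl center_factor; try ring.
  rewrite theta_s_add1 by exact Htau. ring.
Qed.

Lemma qholA_shift_tau N m xi tau : (0 < Im tau)%R -> (m < N)%nat ->
  qhol RA N (shift m tau xi) tau =
  cexp (RtoC (INR N) * aut_exponent tau (xi m)) * qhol RA N xi tau.
Proof.
  intros Htau Hm. unfold qhol. simpl center_factor.
  set (S := csum (seq 0 N) xi). set (a := aut_exponent tau (xi m)).
  rewrite csum_shift, Cplus_comm, theta_s_add_tau, WdenA_shift_tau by assumption. fold S a.
  rewrite cprod_except_cexp, csum_scal by exact Hm. fold S.
  replace (- cexp a) with (- (1) * cexp a) by ring.
  rewrite Cpow_mult_l, sgnL_RA_Cpow, Cpow_cexp by lia.
  transitivity (sgnL RA N * sgnL RA N
                * cexp (aut_exponent tau S + RtoC (INR (N - 1)) * a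
                        + (RtoC 2 * pi_i * S - RtoC 2 * pi_i * xi m))
                * (theta_s N S tau * Wden RA N xi tau)).
  - rewrite !cexp_add. ring.
  - rewrite sgnL_RA_sqr, Cmult_1_l. do 2 f_equal.
    rewrite minus_INR, INR_1, RtoC_minus by lia. unfold a, aut_exponent. ring.
Qed.

Lemma qhol_shift_tau RS N m xi tau : (0 < Im tau)%R -> (m < N)%nat ->
  qhol RS N (shift m tau xi) tau =
  sgniW RS * cexp (RtoC (calN RS N) * aut_exponent tau (xi m)) * qhol RS N xi tau.
Proof.
  intros Htau Hm. destruct (RS) eqn:HRS.
  - rewrite qholA_shift_tau by assumption. simpl. ring.
  all: unfold qhol; simpl center_factor;
    rewrite Wden_shift_tau by (auto; discriminate); ring.
Qed.

Lemma qfun_decomposition RS N L W z : RtoC L <> 0 ->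
  qfun RS N L W z =
  RtoC (exp (- (PI * calN RS N / (L * W)) * rsum (seq 0 N) (fun j => Im (z j) ^ 2))%R)
  * qhol RS N (fun j => z j / RtoC L) (0, W / L)%R.
Proof.
  intros HL. unfold qfun, Cfac, qhol. cbv zeta.
  destruct RS; simpl center_factor; try ring.
  replace (fun j => z j / RtoC L) with (fun j => / RtoC L * z j)
    by (apply functional_extensionality; intros j; unfold Cdiv; ring).
  rewrite csum_scal. unfold theta_s, Cdiv. rewrite (Cmult_comm (csum _ z)). ring.
Qed.

Lemma gaussian_phase (L W n : R) (x : C) : (0 < L)%R -> (0 < W)%R ->
  RtoC (exp (- (PI * n / (L * W)) * (2 * Im x * W + W ^ 2))%R)
  * cexp (RtoC n * aut_exponent (0, W / L)%R (x / RtoC L))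
  = cexp (RtoC (- (2 * PI * n * Re x / L)) * Ci).
Proof.
  intros HL HW. rewrite <- cexp_RtoC, <- cexp_add. f_equal.
  destruct x as [a b]. unfold aut_exponent. C_components; field; lra.
Qed.

Theorem lemma2p1 (L W : R) (N : nat) (RS : RootSys) (z : nat -> C) (m : nat) :
  0 < L -> 0 < W -> (1 <= N)%nat -> (m < N)%nat ->
  (qfun RS N L W (shift m (RtoC L) z) = sgnL RS N * qfun RS N L W z)%C /\
  (qfun RS N L W (shift m (0, W) z) =
    sgniW RS * cexp (RtoC (- (2 * PI * calN RS N * Re (z m) / L)) * Ci)
      * qfun RS N L W z)%C.
Proof.
  intros HL HW _ Hm.
  assert (HLc : RtoC L <> 0) by (intros H; apply RtoC_inj in H; lra).
  set (tau := (0, W / L)%R : C).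
  assert (Htau : (0 < Im tau)%R) by (apply Rdiv_lt_0_compat; assumption).
  rewrite !qfun_decomposition, !shift_div by exact HLc. fold tau.
  split.
  - replace (RtoC L / RtoC L) with (RtoC 1) by (field; exact HLc).
    rewrite qhol_shift1 by assumption.
    rewrite (rsum_shift N m (RtoC L) z (fun x => Im x ^ 2)%R 0)
      by first [exact Hm | destruct (z m); simpl; ring].
    rewrite Rplus_0_l. ring.
  - replace ((0, W)%R / RtoC L) with tau by (unfold tau; C_components; field; lra).
    rewrite qhol_shift_tau by assumption.
    rewrite (rsum_shift N m (0, W)%R z (fun x => Im x ^ 2)%R (2 * Im (z m) * W + W ^ 2)%R)
      by first [exact Hm | destruct (z m); simpl; ring].
    rewrite Rmult_plus_distr_l, exp_plus, RtoC_mult,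
      <- (gaussian_phase L W (calN RS N) (z m)) by assumption.
    fold tau. ring.
Qed.
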